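(* Let $G$ be a Frattini-injective pro-$p$ group, $x,y\in G$ and $\alpha,\beta\in\mathbb{Z}_p\setminus\{0\}$. Then: (i) if $G$ is virtually abelian, then $G$ is abelian; (ii) the centralizer of every element of $G$ is isolated in $G$; (iii) if $x^\alpha$ and $y^\beta$ commute, then $x$ and $y$ commute; (iv) if $x^\alpha = y^\alpha$, then $x=y$.
   Context: $p$ is a prime; subgroups are closed. A pro-$p$ group $G$ is Frattini-injective if distinct finitely generated subgroups of $G$ have distinct Frattini subgroups. A subgroup $H$ of $G$ is isolated if for every $x\in G$, $x^p\in H$ implies $x\in H$. For $\alpha\in\mathbb{Z}_p$, $x^\alpha$ is the $p$-adic power. *)

From HB Require Import structures.
From mathcomp Require Import all_boot all_order all_algebra.
From mathcomp Require Import all_classical all_reals all_analysis.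
Set Implicit Arguments. Unset Strict Implicit. Unset Printing Implicit Defensive.
Local Open Scope classical_set_scope.

Section ProP.
Variables (G : ptopologicalType) (mul : G -> G -> G) (inv : G -> G) (one : G).

Definition group_axioms :=
  [/\ forall x y z, mul x (mul y z) = mul (mul x y) z,
      forall x, mul one x = x, forall x, mul x one = x,
      forall x, mul (inv x) x = one & forall x, mul x (inv x) = one].

Definition topological_group :=
  [/\ group_axioms, continuous (fun xy : G * G => mul xy.1 xy.2)
    & continuous inv].

Fixpoint gpow (x : G) (n : nat) : G :=
  if n is m.+1 then mul x (gpow x m) else one.

Definition subgroup (H : set G) :=
  [/\ H one, forall x y, H x -> H y -> H (mul x y) & forall x, H x -> H (inv x)].

Definition normal (N : set G) :=
  subgroup N /\ forall g x, N x -> N (mul (mul g x) (inv g)).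

(* the subgroup N of G has (finite) index n: there are n representatives
   of pairwise distinct left cosets covering G *)
Definition has_index (N : set G) (n : nat) :=
  exists s : seq G, [/\ size s = n,
    forall g, exists2 r, r \in s & N (mul (inv r) g)
  & forall i j, (i < n)%N -> (j < n)%N ->
      N (mul (inv (nth one s i)) (nth one s j)) -> i = j].

Definition finite_index (N : set G) := exists n, has_index N n.

Definition pro_p_group (p : nat) :=
  [/\ prime p, topological_group, hausdorff_space G,
      compact [set: G] /\ totally_disconnected [set: G]
    & forall N : set G, open N -> normal N -> exists k, has_index N (p ^ k)%N].

Definition tgen (s : seq G) : set G :=
  \bigcap_(K in [set K : set G | [/\ subgroup K, closed K
                   & forall x, x \in s -> K x]]) K.

Definition fg_closed_subgroup (H : set G) :=
  [/\ subgroup H, closed H & exists s : seq G, H = tgen s].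

Definition rel_open (H K : set G) := exists U : set G, open U /\ K = U `&` H.

Definition maximal_open_subgroup (H K : set G) :=
  [/\ subgroup K, K `<=` H, rel_open H K, K <> H
    & forall L : set G, subgroup L -> K `<=` L -> L `<=` H -> L = K \/ L = H].

Definition frattini (H : set G) : set G :=
  H `&` \bigcap_(K in [set K | maximal_open_subgroup H K]) K.

Definition frattini_injective :=
  forall H K : set G, fg_closed_subgroup H -> fg_closed_subgroup K ->
    frattini H = frattini K -> H = K.

Definition abelian := forall x y : G, mul x y = mul y x.

Definition virtually_abelian :=
  exists A : set G, [/\ subgroup A, finite_index A
    & forall x y, A x -> A y -> mul x y = mul y x].

Definition centralizer (x : G) : set G := [set g | mul g x = mul x g].

Definition isolated_subgroup (p : nat) (H : set G) :=
  forall x, H (gpow x p) -> H x.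

End ProP.

Record padic_int (p : nat) := MkZp {
  zp_seq : nat -> nat;
  zp_bound : forall n, (zp_seq n < p ^ n)%N;
  zp_compat : forall n, (zp_seq n.+1 %% p ^ n)%N = zp_seq n }.

Definition zp_nonzero p (a : padic_int p) := exists n, zp_seq a n <> 0%N.

Definition padic_pow (G : ptopologicalType) (mul : G -> G -> G) (one : G)
  p (x : G) (a : padic_int p) : G :=
  lim ((fun n => gpow mul one x (zp_seq a n)) @ \oo).

(* For a procyclic subgroup <x> of a pro-p group the Frattini subgroup is
   <x^p>: every maximal open subgroup of <x> contains x^p, and when
   <x^p> <> <x> the subgroup <x^p> is itself maximal open, <x> being the
   union of its p cosets x^i <x^p>.  Hence in a Frattini-injective group
   x^p = y^p forces <x> = <y>; then x and y commute and (x y^-1)^p = 1, while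
   t^p = 1 forces <t> = <1>.  So p-th roots are unique, and centralizers are
   isolated because (x^g)^p = x^p whenever g centralizes x^p.  A p-adic power
   x^a with a <> 0 of valuation v topologically generates x^(p^v), since
   a / p^v is a p-adic unit; this reduces (iii) and (iv) to uniqueness of
   p-th roots.  So does (i): every x has a power x^(p^k u), u prime to p, in
   an abelian subgroup of finite index, and x^(p^k) lies in the procyclic
   group it generates. *)

From HB Require Import structures.
From mathcomp Require Import all_boot all_order all_algebra.
From mathcomp Require Import all_classical all_reals all_analysis.
From mathcomp Require Import fingroup perm action cyclic.
From Pilot Require Import Defs.
Set Implicit Arguments. Unset Strict Implicit. Unset Printing Implicit Defensive.

Lemma zp_seq_mod p (a : padic_int p) m k : zp_seq a (m + k) %% p ^ m = zp_seq a m.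
Proof.
elim: k => [|k IH]; first by rewrite addn0 modn_small ?zp_bound.
by rewrite addnS -(modn_dvdm _ (dvdn_exp2l p (leq_addr k m))) zp_compat.
Qed.

Lemma zp_seq_decomp p (a : padic_int p) m n : m <= n ->
  zp_seq a n = zp_seq a m + zp_seq a n %/ p ^ m * p ^ m.
Proof.
move=> le_mn; rewrite {1}(divn_eq (zp_seq a n) (p ^ m)) addnC; congr (_ + _).
by rewrite -(subnKC le_mn) zp_seq_mod.
Qed.

Lemma zp_valuation p (a : padic_int p) : prime p -> zp_nonzero a ->
  exists v n0, forall n, n0 <= n ->
    exists2 b, zp_seq a n = p ^ v * b & coprime p b.
Proof.
move=> p_pr [n0 /eqP]; rewrite -lt0n => a_gt0.
have [u p'u] := pfactor_coprime p_pr a_gt0; rewrite mulnC; set v := logn p _ => def_a.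
have lt_v_n0 : v < n0.
  rewrite -(ltn_exp2l _ _ (prime_gt1 p_pr)); apply: leq_ltn_trans (zp_bound a n0).
  by rewrite def_a leq_pmulr //; move: a_gt0; rewrite def_a muln_gt0 => /andP[].
exists v, n0 => n le_n0n; rewrite (zp_seq_decomp a le_n0n) def_a.
have {2}-> : p ^ n0 = p ^ v * p ^ (n0 - v) by rewrite -expnD subnKC // ltnW.
exists (u + zp_seq a n %/ p ^ n0 * p ^ (n0 - v)); first by rewrite mulnDr mulnCA.
have /dvdnP[c ->] : p %| p ^ (n0 - v) by rewrite dvdn_exp // subn_gt0.
by rewrite -coprime_modr addnC mulnA modnMDl coprime_modr.
Qed.

Lemma semiregular_perm_expg_card n (s : {perm 'I_n}) :
  (forall i m, iter m s i = i -> (s ^+ m)%g = 1%g) -> (s ^+ n)%g = 1%g.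
Proof.
move=> s_semireg; apply/eqP; rewrite -order_dvdn.
have stab1 i : ('C_(<[s]>)[i | 'P])%g = 1%g.
  apply/eqP; rewrite finset.eqEsubset sub1G andbT; apply/fintype.subsetP => t.
  rewrite inE => /andP[/cycleP[m ->]] /astab1P; rewrite /= apermE permX => /s_semireg ->.
  exact: group1.
have acts_s : [acts <[s]>%g, on [set: 'I_n] | 'P] by apply/actsP => a _ x; rewrite !inE.
rewrite -[X in _ %| X]card_ord -cardsT -(acts_sum_card_orbit acts_s).
apply: dvdn_sum => _ /imsetP[i _ ->].
by rewrite orderE -(card_orbit_stab 'P _ i) stab1 cards1 muln1.
Qed.

Local Open Scope classical_set_scope.

(** * Quasi-components of compact Hausdorff spaces *)

Section QuasiComponent.
Variable T : topologicalType.
Hypotheses (hsdfT : hausdorff_space T) (cmpT : compact [set: T]).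

Definition quasi_component (x : T) := [set z | forall U, clopen U -> U x -> U z].

Lemma closed_quasi_component x : closed (quasi_component x).
Proof.
have -> : quasi_component x = \bigcap_(U in [set U | clopen U /\ U x]) U.
  by apply/seteqP; split=> [z Qz U [] | z Qz U cU Ux]; [exact: Qz | exact: Qz].
by apply: closed_bigI => U [[]].
Qed.

Lemma compact_closed_separation (A B : set T) : closed A -> closed B ->
  A `<=` ~` B -> exists U V, [/\ open U, open V, A `<=` U, B `<=` V & U `<=` ~` V].
Proof.
move=> clA clB AB.
have nbhsAC : set_nbhs A (~` B).
  by apply/set_nbhsP; exists (~` B); split => //; exact: closed_openC.
have [C /set_nbhsP[U [oU AU UC]] clC] := compact_normal hsdfT cmpT clA nbhsAC.
exists U, (~` closure C); split => //; first exact/closed_openC/closed_closure.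
  by move=> z Bz clz; exact: clC clz Bz.
by move=> z /UC /subset_closure Cz; apply.
Qed.

Lemma quasi_component_clopen_separation x (K : set T) : closed K ->
  quasi_component x `<=` ~` K -> exists C, [/\ clopen C, C x & C `<=` ~` K].
Proof.
move=> clK QK; apply: contrapT => noC.
pose F := filter_from [set C : set T | clopen C /\ C x] (fun C => C `&` K).
have FF : Filter F.
  apply: filter_from_filter; first by exists setT; split => //; exact: clopenT.
  move=> A B [cA Ax] [cB Bx]; exists (A `&` B); first by split; [exact: clopenI|].
  by move=> w [[]].
have PF : ProperFilter F.
  apply: filter_from_proper => C [cC Cx]; apply/set0P/negP => /eqP.
  by move/disjoints_subset => CK; apply: noC; exists C.
have [|z [Kz clFz]] := subclosed_compact clK cmpT (subsetT K) PF.
  by exists setT; [split => //; exact: clopenT | move=> w []].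
suff Qz : quasi_component x z by exact: QK Qz Kz.
move=> U [oU clU] Ux; apply: contrapT => nUz.
have [w [[Uw _] nUw]] : (U `&` K) `&` ~` U !=set0.
  by apply: clFz; [exists U | apply: open_nbhs_nbhs; split => //; exact: closed_openC].
exact: nUw.
Qed.

Lemma connected_quasi_component x : connected (quasi_component x).
Proof.
set Q := quasi_component x; have clQ : closed Q by exact: closed_quasi_component.
move=> B [b Bb] [W oW BQW] [E clE BQE].
have clB : closed B by rewrite BQE; exact: closedI.
have clQW : closed (Q `&` ~` W) by exact: closedI clQ (open_closedC oW).
have [U [V [oU oV BU QWV UV]]] : exists U V, [/\ open U, open V, B `<=` U,
    Q `&` ~` W `<=` V & U `<=` ~` V].
  by apply: compact_closed_separation => // z; rewrite BQW => -[_ Wz] [_]; apply.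
have [C [[oC clC] Cx CUV]] : exists C, [/\ clopen C, C x & C `<=` ~` ~` (U `|` V)].
  apply: quasi_component_clopen_separation; first exact/open_closedC/openU.
  move=> z Qz; rewrite setCK; have [Wz|nWz] := pselect (W z).
    by left; apply: BU; rewrite BQW.
  by right; apply: QWV.
rewrite setCK in CUV.
have clopen_CU : clopen (C `&` U).
  split; first exact: openI.
  suff -> : C `&` U = C `&` ~` V by exact: closedI clC (open_closedC oV).
  apply/seteqP; split=> z [Cz UVz]; split=> //; first exact: UV.
  by case: (CUV z Cz).
have Qb : Q b by rewrite BQW in Bb; case: Bb.
have [CUx|nCUx] := pselect ((C `&` U) x); last first.
  by have [] := Qb _ (clopenC setT clopen_CU) nCUx; split; [exact: Qb | exact: BU].
apply/seteqP; split=> [z|z Qz]; first by rewrite BQW => -[].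
rewrite BQW; split=> //; apply: contrapT => nWz.
by case: (Qz _ clopen_CU CUx) => _ /UV; apply; exact: QWV.
Qed.

Lemma compact_totally_disconnected_zero_dimensional :
  totally_disconnected [set: T] -> zero_dimensional T.
Proof.
move=> tdT x y /eqP xNy; apply: contrapT => noU; apply: xNy.
have Qy : quasi_component x y.
  by move=> U cU Ux; apply: contrapT => nUy; apply: noU; exists U.
have : quasi_component x `<=` connected_component [set: T] x.
  by apply: connected_component_max => //; exact: connected_quasi_component.
by rewrite tdT // => /(_ y Qy).
Qed.

End QuasiComponent.

(** * Topological groups *)

HB.mixin Record isTopologicalGroup G of monoid.Group G & Topological G := {
  mulg_continuous : continuous (fun xy : G * G => (xy.1 * xy.2)%g);
  invg_continuous : continuous (@inv G) }.

#[short(type="topGroupType")]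
HB.structure Definition TopologicalGroup :=
  {G of isTopologicalGroup G & monoid.Group G & PointedTopological G}.

Section TopologicalGroupTheory.
Variable G : topGroupType.
Implicit Types (x y g h : G) (A D H K L M N W : set G).
Local Open Scope group_scope.
Local Notation subgroup := (subgroup (@mul G) (@inv G) 1).
Local Notation normal := (normal (@mul G) (@inv G) 1).
Local Notation has_index := (has_index (@mul G) (@inv G) 1).
Local Notation centralizer := (centralizer (@mul G)).
Local Notation tgen := (tgen (@mul G) (@inv G) 1).
Local Notation maximal_open_subgroup := (maximal_open_subgroup (@mul G) (@inv G) 1).
Local Notation frattini := (frattini (@mul G) (@inv G) 1).
Local Notation padic_pow := (padic_pow (@mul G) 1).

(* Some goals are closed with [exact] rather than [exact:]: membership in
   [tgen s] unfolds to a product, which [apply:] starts instantiating, and the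
   products built by generic monoid lemmas reach [G] through other structure
   projections, which only full conversion identifies. *)

Lemma gpowE x n : gpow (@mul G) 1 x n = x ^+ n.
Proof. by elim: n => //= n ->; rewrite expgS. Qed.

Section Subgroup.
Variable H : set G.
Hypothesis sH : subgroup H.

Lemma subgroup1 : H 1. Proof. by case: sH. Qed.
Lemma subgroupM x y : H x -> H y -> H (x * y). Proof. by case: sH => _ + _; apply. Qed.
Lemma subgroupV x : H x -> H x^-1. Proof. by case: sH => _ _; apply. Qed.

Lemma subgroupX x n : H x -> H (x ^+ n).
Proof. by move=> Hx; elim: n => [|n IH]; [exact: subgroup1 | rewrite expgS; exact: subgroupM]. Qed.

Lemma subgroupVM_sym x y : H (x^-1 * y) -> H (y^-1 * x).
Proof. by move/subgroupV; rewrite invgM invgK. Qed.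

Lemma subgroupVM_trans x y z : H (x^-1 * y) -> H (y^-1 * z) -> H (x^-1 * z).
Proof. by move=> Hxy /(subgroupM Hxy); rewrite mulgA mulgK. Qed.

Lemma subgroupX_coprime x c e : H (x ^+ c) -> H (x ^+ e) -> 0 < c ->
  coprime c e -> H x.
Proof.
move=> Hxc Hxe c_gt0 co_ce; have [a _ /dvdnP[b def_b]] := Bezoutl e c_gt0.
rewrite (eqP co_ce) in def_b; have := subgroupM (subgroupV (subgroupX a Hxe)) (subgroupX b Hxc).
by rewrite -!expgnA mulnC [(c * b)%N]mulnC -def_b addnC expgnDr expg1 mulKg.
Qed.

End Subgroup.

Lemma normalJ N g y : normal N -> N y -> N (g * y * g^-1).
Proof. by case=> _; apply. Qed.

Lemma normal_expg_congr N x y n : normal N -> N (x^-1 * y) -> N ((x ^+ n)^-1 * y ^+ n).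
Proof.
move=> nN Nxy; elim: n => [|n IH]; first by rewrite mulg1 invg1; exact: subgroup1 nN.1.
have := subgroupM nN.1 (normalJ x^-1 nN IH) Nxy.
by rewrite !expgSr invgK invgM !mulgA mulgK.
Qed.

Lemma centralizer_subgroup a : subgroup (centralizer a).
Proof.
split=> [|x y cxa cya|x cxa]; apply: commute_sym; first exact: commute1.
  by apply: commuteM; apply: commute_sym.
exact/commuteV/commute_sym.
Qed.

Section CosetIndex.
Variables (N : set G) (n : nat) (s : seq G) (c : G -> 'I_n).
Hypotheses (sN : subgroup N) (c_rep : forall g, N ((s`_(c g))^-1 * g))
  (s_sep : forall i j : 'I_n, N ((s`_i)^-1 * s`_j) -> i = j).

Lemma coset_index_expg x : exists2 m, 0 < m & N (x ^+ m).
Proof.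
have [/injectiveP c_inj|/injectivePn[i [j neq_ij eq_cij]]] :=
  boolP (injectiveb (fun i : 'I_n.+1 => c (x ^+ i))).
  by have := leq_card _ c_inj; rewrite !card_ord ltnn.
wlog lt_ij : i j neq_ij eq_cij / i < j.
  move=> IH; have [lt_ij|lt_ji|/val_inj eq_ij] := ltngtP i j; first exact: (IH i j).
    by apply: (IH j i) => //; rewrite eq_sym.
  by rewrite eq_ij eqxx in neq_ij.
exists (j - i); first by rewrite subn_gt0.
have := c_rep (x ^+ j); rewrite -eq_cij.
move=> /(subgroupVM_trans sN (subgroupVM_sym sN (c_rep _))).
have -> : x ^+ j = x ^+ i * x ^+ (j - i) by rewrite -expgnDr subnKC // ltnW.
by rewrite mulKg.
Qed.

(* Left multiplication by x permutes the n cosets; as N is normal, a power of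
   this permutation fixing one coset fixes all of them. *)
Lemma normal_coset_index_expg x : normal N -> N (x ^+ n).
Proof.
move=> nN; have Nconj g y : N (g^-1 * y * g) -> N y.
  by move/(normalJ g nN); rewrite !mulgA mulgV mul1g mulgK.
pose f (i : 'I_n) := c (x * s`_i).
have f_inj : injective f.
  move=> i j eq_fij; apply: s_sep; have := c_rep (x * s`_j).
  rewrite -/(f j) -eq_fij => /(subgroupVM_trans sN (subgroupVM_sym sN (c_rep _))).
  by rewrite invgM -mulgA mulKg.
pose sigma := perm f_inj.
have iter_rep m i : N ((s`_(iter m sigma i))^-1 * (x ^+ m * s`_i)).
  elim: m => [|m IH]; first by rewrite mul1g mulVg; exact: subgroup1.
  rewrite /= permE; apply: (subgroupVM_trans sN (c_rep _)).
  by rewrite invgM expgS -!mulgA mulKg.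
have semireg i m : iter m sigma i = i -> (sigma ^+ m)%g = 1%g.
  move=> fix_i; have := iter_rep m i; rewrite fix_i mulgA => /Nconj Nxm.
  apply/permP => j; rewrite permX perm1; apply: s_sep.
  apply: (subgroupVM_trans sN (iter_rep m j)); apply: (subgroupVM_sym sN).
  by have := normalJ (s`_j)^-1 nN Nxm; rewrite invgK -mulgA.
have := semiregular_perm_expg_card semireg; move/permP/(_ (c 1)).
rewrite permX perm1 => fix_c1; have := iter_rep n (c 1); rewrite fix_c1.
by rewrite mulgA => /Nconj.
Qed.

End CosetIndex.

Lemma has_index_coset_index N n : has_index N n ->
  exists s (c : G -> 'I_n), (forall g, N ((s`_(c g))^-1 * g)) /\
    (forall i j : 'I_n, N ((s`_i)^-1 * s`_j) -> i = j).
Proof.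
case=> s [size_s s_cover s_sep]; exists s.
have c_spec g : {i : 'I_n | N ((s`_i)^-1 * g)}.
  apply: cid; have [r s_r Nrg] := s_cover g.
  have lt_r_n : index r s < n by rewrite -size_s index_mem.
  by exists (Ordinal lt_r_n); rewrite /= nth_index.
exists (fun g => sval (c_spec g)); split=> [g|i j]; first exact: (svalP (c_spec g)).
by move/s_sep => /(_ (ltn_ord i) (ltn_ord j)) /val_inj.
Qed.

Lemma normal_index_expg N n x : normal N -> has_index N n -> N (x ^+ n).
Proof.
move=> nN /has_index_coset_index[s [c [c_rep s_sep]]].
exact: (normal_coset_index_expg nN.1 c_rep s_sep).
Qed.

Lemma finite_index_expg A n x : subgroup A -> has_index A n ->
  exists2 m, 0 < m & A (x ^+ m).
Proof.
move=> sA /has_index_coset_index[s [c [c_rep _]]].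
exact: (coset_index_expg sA c_rep x).
Qed.

Lemma cvg_mulg T (F : set_system T) {FF : Filter F} (f f' : T -> G) a b :
  f @ F --> a -> f' @ F --> b -> (fun t => f t * f' t) @ F --> a * b.
Proof. exact: continuous2_cvg (@mulg_continuous G (a, b)). Qed.

Lemma cvg_invg T (F : set_system T) {FF : Filter F} (f : T -> G) a :
  f @ F --> a -> (fun t => (f t)^-1) @ F --> a^-1.
Proof. exact: continuous_cvg (@invg_continuous G a). Qed.

Lemma nbhs_mulgl a b W : nbhs (a * b) W -> nbhs b [set y | W (a * y)].
Proof. exact: (cvg_mulg (cvg_cst a) (@cvg_id _ (nbhs b))). Qed.

Lemma nbhs_invg a W : nbhs a^-1 W -> nbhs a [set y | W y^-1].
Proof. exact: (cvg_invg (@cvg_id _ (nbhs a))). Qed.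

Lemma nbhs_lcoset N g : open N -> N 1 -> nbhs g [set z | N (g^-1 * z)].
Proof.
move=> oN N1; apply: nbhs_mulgl; rewrite mulVg.
exact: open_nbhs_nbhs (conj oN N1).
Qed.

Lemma closed_lcoset a K : closed K -> closed [set g | K (a * g)].
Proof.
apply: preimage_closed => g _.
exact: (cvg_mulg (cvg_cst a) (@cvg_id _ (nbhs g))).
Qed.

Lemma continuous_conjg a : continuous (fun g : G => g * a * g^-1).
Proof.
move=> g; apply: cvg_mulg; last exact: cvg_invg.
by apply: cvg_mulg; [exact: cvg_id | exact: cvg_cst].
Qed.

Lemma subgroup_open H : subgroup H -> nbhs 1 H -> open H.
Proof.
move=> sH H1; rewrite openE => h Hh; rewrite /interior.
have : nbhs (h^-1 * h) H by rewrite mulVg.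
by move/nbhs_mulgl; apply: filterS => y /(subgroupM sH Hh); rewrite mulKVg.
Qed.

Lemma rel_open_subgroup_closed H K : subgroup H -> closed H -> subgroup K ->
  rel_open H K -> closed K.
Proof.
move=> sH clH sK [U [oU defK]]; rewrite closedE => g; apply: contra_notP => nKg.
have [Hg|nHg] := pselect (H g); last first.
  apply: filterS (open_nbhs_nbhs (conj (closed_openC clH) nHg)) => y nHy Ky.
  by apply: nHy; move: Ky; rewrite defK => -[].
have U1 : U 1 by move: (subgroup1 sK); rewrite defK => -[].
have : nbhs (g^-1 * g) U by rewrite mulVg; exact: open_nbhs_nbhs.
move/nbhs_mulgl; apply: filterS => y Uy Ky; apply: nKg.
have Hy : H y by move: Ky; rewrite defK => -[].
have Kgy : K (g^-1 * y).
  by rewrite defK; split; [exact: Uy | exact (subgroupM sH (subgroupV sH Hg) Hy)].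
by have := subgroupM sK Ky (subgroupV sK Kgy); rewrite invgM invgK mulKVg.
Qed.

Lemma tgen_min s K : subgroup K -> closed K -> (forall y, y \in s -> K y) ->
  tgen s `<=` K.
Proof. by move=> sK clK sK_s g; apply; split. Qed.

Lemma tgen_subgroup s : subgroup (tgen s).
Proof.
split=> [K [[]] //|g h tg th K hK|g tg K hK]; case: (hK) => sK _ _.
  by apply: (subgroupM sK); [exact: tg | exact: th].
by apply: (subgroupV sK); exact: tg.
Qed.

Lemma tgen_closed s : closed (tgen s).
Proof. by apply: closed_bigI => K []. Qed.
Arguments tgen_closed : clear implicits.

Lemma tgen_fg s : fg_closed_subgroup (@mul G) (@inv G) 1 (tgen s).
Proof. by split; [exact: tgen_subgroup | exact: tgen_closed | exists s]. Qed.

Lemma tgen1_gen x : tgen [:: x] x.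
Proof. by move=> K [_ _]; apply; rewrite inE. Qed.
Arguments tgen1_gen : clear implicits.

Lemma tgen1_min x K : subgroup K -> closed K -> K x -> tgen [:: x] `<=` K.
Proof. by move=> sK clK Kx; apply: tgen_min => // y; rewrite inE => /eqP ->. Qed.

Lemma tgen1_expg x n : tgen [:: x] (x ^+ n).
Proof. exact (subgroupX (tgen_subgroup [:: x]) n (tgen1_gen x)). Qed.
Arguments tgen1_expg : clear implicits.

(** * Profinite groups *)

Section Profinite.
Hypothesis hsdfG : hausdorff_space G.

Lemma centralizer_closed a : closed (centralizer a).
Proof.
have -> : centralizer a = (fun g => g * a * g^-1) @^-1` [set a].
  apply/seteqP; split=> g; rewrite /centralizer /= => ga_ag; first by rewrite ga_ag mulgK.
  by rewrite -{2}ga_ag mulgVK.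
apply: preimage_closed; first by move=> g _; exact: continuous_conjg.
exact/accessible_closed_set1/hausdorff_accessible.
Qed.

Lemma tgen1_eq1 g : tgen [:: 1] g -> g = 1.
Proof.
apply: (@tgen1_min 1 [set 1]) => //; last exact/accessible_closed_set1/hausdorff_accessible.
by split=> [|a b -> ->|a ->]; rewrite ?mulg1 ?invg1.
Qed.

Lemma commute_tgen1 w z c : commute w z -> tgen [:: w] c -> commute c z.
Proof. by move=> cwz /(tgen1_min (centralizer_subgroup z) (@centralizer_closed z) cwz). Qed.

Lemma tgen1_commute x a b : tgen [:: x] a -> tgen [:: x] b -> commute a b.
Proof.
move=> ta tb; apply: commute_tgen1 ta.
exact/commute_sym/(commute_tgen1 (commute_refl x) tb).
Qed.

Hypothesis cmpG : compact [set: G].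

Lemma open_subgroup_normal_core H : subgroup H -> open H ->
  exists N, [/\ open N, normal N & N `<=` H].
Proof.
move=> sH oH; pose N := [set n | forall g, H (g * n * g^-1)].
have nN : normal N.
  split; last by move=> g n Nn h; have := Nn (h * g); rewrite invgM !mulgA.
  split=> [g|m n Nm Nn g|n Nn g]; first by rewrite mulg1 mulgV; exact: subgroup1.
    by have := subgroupM sH (Nm g) (Nn g); rewrite -!mulgA mulKg.
  by have := subgroupV sH (Nn g); rewrite !invgM invgK mulgA.
have N1 : nbhs 1 N.
  suff : \forall i \near 1, [set: G] `<=` (fun g => H (g * i * g^-1)).
    by apply: filterS => i HN g; exact: HN.
  apply: ((compact_near_coveringP _).1 cmpG G (nbhs 1) (fun i g => H (g * i * g^-1))) => g _.
  have : nbhs (g * 1 * g^-1) H.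
    by rewrite mulg1 mulgV; exact: open_nbhs_nbhs (conj oH (subgroup1 sH)).
  exact: (cvg_mulg (cvg_mulg cvg_fst cvg_snd) (cvg_invg cvg_fst)).
exists N; split=> //; first exact: subgroup_open nN.1 N1.
by move=> n /(_ 1); rewrite mul1g invg1 mulg1.
Qed.

Hypothesis tdG : totally_disconnected [set: G].

Lemma nbhs1_open_subgroup W : nbhs 1 W -> exists H, [/\ subgroup H, open H & H `<=` W].
Proof.
move=> W1; have zdG := compact_totally_disconnected_zero_dimensional hsdfG cmpG tdG.
have [V [V1 [oV clV]] VW] := zero_dimensional_cvg hsdfG zdG cmpG W1.
have cmpV : compact V := subclosed_compact clV cmpG (subsetT V).
have VM : \forall i \near 1, V `<=` (fun x => V (x * i)).
  apply: ((compact_near_coveringP _).1 cmpV G (nbhs 1) (fun i x => V (x * i))) => x Vx.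
  have : nbhs (x * 1) V by rewrite mulg1; exact: open_nbhs_nbhs (conj oV Vx).
  exact: (cvg_mulg cvg_fst cvg_snd).
have VMV : \forall i \near 1, V `<=` (fun x => V (x * i^-1)).
  by apply: (@nbhs_invg 1 (fun i => V `<=` (fun x => V (x * i)))); rewrite invg1.
pose H := [set g | forall x, V x -> V (x * g) /\ V (x * g^-1)].
have sH : subgroup H.
  split=> [x Vx|g h Hg Hh x Vx|g Hg x Vx]; first by rewrite invg1 mulg1.
  - split; first by rewrite mulgA; exact: (Hh _ (Hg x Vx).1).1.
    by rewrite invgM mulgA; exact: (Hg _ (Hh x Vx).2).2.
  - by rewrite invgK; case: (Hg x Vx).
exists H; split=> //; last by move=> g /(_ 1 V1) [+ _]; rewrite mul1g => /VW.
apply: subgroup_open => //; apply: filterS (filterI VM VMV) => i [Vi VVi] x Vx.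
by split; [exact: Vi | exact: VVi].
Qed.

Lemma nbhs1_open_normal W : nbhs 1 W -> exists N, [/\ open N, normal N & N `<=` W].
Proof.
move=> /nbhs1_open_subgroup[H [sH oH HW]].
have [N [oN nN NH]] := open_subgroup_normal_core sH oH.
by exists N; split=> // n /NH /HW.
Qed.

Lemma closed_open_normal_approx D z : closed D ->
  (forall N, open N -> normal N -> exists2 d, D d & N (d^-1 * z)) -> D z.
Proof.
move=> clD approx; apply: contrapT => nDz.
have : nbhs (z * 1) (~` D).
  by rewrite mulg1; exact: open_nbhs_nbhs (conj (closed_openC clD) nDz).
move/nbhs_mulgl/nbhs1_open_normal => [N [oN nN ND]].
have [d Dd Ndz] := approx N oN nN.
by apply: (ND _ (subgroupVM_sym nN.1 Ndz)); rewrite mulKVg.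
Qed.

Lemma open_normal_cauchy_cvg (f : nat -> G) :
  (forall N, open N -> normal N -> exists m, forall n, m <= n -> N ((f m)^-1 * f n)) ->
  f @ \oo --> lim (f @ \oo).
Proof.
move=> cauchy_f; have [L [_ clusterL]] := @cmpG (f @ \oo) _ filterT.
suff fL : f @ \oo --> L by rewrite (cvg_lim hsdfG fL).
move=> W; rewrite -[L in nbhs L]mulg1 => /nbhs_mulgl/nbhs1_open_normal.
move=> [N [oN nN NW]]; have [m fmN] := cauchy_f N oN nN.
have tail_m : (f @ \oo) [set z | exists2 n, m <= n & z = f n].
  by exists m => // n /= le_mn; exists n.
have [_ [[n0 le_mn0 ->] NLfn0]] := clusterL _ _ tail_m (nbhs_lcoset L oN (subgroup1 nN.1)).
exists m => // n /= le_mn; rewrite -(mulKVg L (f n)); apply: NW.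
have NLfm := subgroupVM_trans nN.1 NLfn0 (subgroupVM_sym nN.1 (fmN n0 le_mn0)).
exact (subgroupVM_trans nN.1 NLfm (fmN n le_mn)).
Qed.

(** * Pro-p groups *)

Variable p : nat.
Hypotheses (p_pr : prime p)
  (idxG : forall N, open N -> normal N -> exists k, has_index N (p ^ k)).

Lemma open_normal_expg_pow N x : open N -> normal N -> exists k, N (x ^+ (p ^ k)).
Proof.
by move=> oN nN; have [k idx_k] := idxG oN nN; exists k; exact: normal_index_expg.
Qed.

Lemma padic_pow_approx x (a : padic_int p) N : open N -> normal N ->
  exists m, forall n, m <= n -> N ((padic_pow x a)^-1 * x ^+ zp_seq a n).
Proof.
pose f n := x ^+ zp_seq a n.
have cvg_f : f @ \oo --> padic_pow x a.
  rewrite /Defs.padic_pow (_ : (fun n => _) = f); last by apply: funext => n; rewrite gpowE.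
  apply: open_normal_cauchy_cvg => M oM nM; have [k Mk] := open_normal_expg_pow x oM nM.
  exists k => n le_kn; rewrite /f (zp_seq_decomp a le_kn) expgnDr mulKg mulnC expgnA.
  exact (subgroupX nM.1 _ Mk).
move=> oN nN; have [m _ fN] := cvg_f _ (nbhs_lcoset (padic_pow x a) oN (subgroup1 nN.1)).
by exists m => n le_mn; exact: fN.
Qed.

Lemma tgen1_coprime_approx w y :
  (forall N, open N -> normal N -> exists2 b, coprime p b & N (w^-1 * y ^+ b)) ->
  tgen [:: w] y.
Proof.
move=> approx; apply: closed_open_normal_approx; first exact: tgen_closed.
move=> N oN nN; have [b p'b Nwyb] := approx N oN nN.
have [k Nyk] := open_normal_expg_pow y oN nN.
have b_gt0 : 0 < b.
  by move: p'b; rewrite lt0n; apply: contraTneq => ->; rewrite prime_coprime ?dvdn0.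
have [a _ /dvdnP[c def_c]] := Bezoutl (p ^ k) b_gt0.
rewrite coprime_sym in p'b; rewrite (eqP (coprimeXr k p'b)) in def_c.
exists (w ^+ c); first exact: tgen1_expg.
have := subgroupM nN.1 (normal_expg_congr c nN Nwyb) (subgroupV nN.1 (subgroupX nN.1 a Nyk)).
rewrite -!expgnA [(b * c)%N]mulnC -def_c [(p ^ k * a)%N]mulnC expgnDr expg1.
by rewrite mulgA mulgK.
Qed.

Lemma tgen1_expg_coprime x u : coprime p u -> tgen [:: x ^+ u] x.
Proof.
move=> p'u; apply: tgen1_coprime_approx => N oN nN.
by exists u => //; rewrite mulVg; exact: subgroup1 nN.1.
Qed.

Lemma padic_pow_tgen x (a : padic_int p) v n0 :
  (forall n, n0 <= n -> exists2 b, zp_seq a n = (p ^ v * b)%N & coprime p b) ->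
  tgen [:: padic_pow x a] (x ^+ (p ^ v)).
Proof.
move=> val_a; apply: tgen1_coprime_approx => N oN nN.
have [m approx] := padic_pow_approx x a oN nN.
have [b def_b p'b] := val_a (maxn m n0) (leq_maxr _ _).
by exists b => //; rewrite -expgnA -def_b; exact: approx (leq_maxl _ _).
Qed.
Arguments padic_pow_tgen x {a v n0}.

Section ProcyclicFrattini.
Variable x : G.
Local Notation H := (tgen [:: x]).
Local Notation P := (tgen [:: x ^+ p]).
Local Notation coset n := [set g | P ((x ^+ n)^-1 * g)].

Let sH : subgroup H := tgen_subgroup _.
Let sP : subgroup P := tgen_subgroup _.

Lemma tgen1_expg_sub : P `<=` H.
Proof. exact (tgen1_min sH (tgen_closed _) (tgen1_expg x p)). Qed.

(* L = {g in <x> | g^p in M} lies between M and <x>; were it M, then from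
   x^(p^k) in M (k given by an open normal subgroup inside M) we would descend
   to x in M. *)
Lemma maximal_open_subgroup_tgen1_expg M : maximal_open_subgroup H M -> M (x ^+ p).
Proof.
case=> sM MH relM MneH maxM; pose L := [set g | H g /\ M (g ^+ p)].
have sL : subgroup L.
  split=> [|g h [Hg Mg] [Hh Mh]|g [Hg Mg]].
  - by split; [exact: subgroup1 sH | rewrite expg1n; exact: subgroup1 sM].
  - split; first exact (subgroupM sH Hg Hh).
    by rewrite expgMn; [exact (subgroupM sM Mg Mh) | exact (tgen1_commute Hg Hh)].
  - by split; [exact (subgroupV sH Hg) | rewrite expVgn; exact (subgroupV sM Mg)].
have ML : M `<=` L by move=> g Mg; split; [exact: MH | exact (subgroupX sM p Mg)].
have [LM|LH] := maxM L sL ML (fun g Lg => Lg.1); last first.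
  by have [] : L x by rewrite LH; exact: tgen1_gen.
exfalso; apply: MneH; apply/seteqP; split=> // g Hg.
have clM : closed M := rel_open_subgroup_closed sH (tgen_closed _) sM relM.
suff Mx : M x by exact: tgen1_min sM clM Mx g Hg.
have [U [oU defM]] := relM.
have U1 : U 1 by move: (subgroup1 sM); rewrite defM => -[].
have [N [oN nN NU]] := nbhs1_open_normal (open_nbhs_nbhs (conj oU U1)).
have [k Nxk] := open_normal_expg_pow x oN nN.
have : M (x ^+ (p ^ k)) by rewrite defM; split; [exact: NU | exact: tgen1_expg].
elim: k {Nxk} => [|k IH]; first by rewrite expg1.
rewrite expnSr expgnA => Mxkp; apply: IH; rewrite -LM; split=> //; exact: tgen1_expg.
Qed.

Lemma closed_coset n : closed (coset n).
Proof. exact: closed_lcoset (tgen_closed _). Qed.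

Lemma coset_sub n : coset n `<=` H.
Proof.
move=> g Pg; rewrite -(mulKVg (x ^+ n) g).
exact (subgroupM sH (tgen1_expg x n) (tgen1_expg_sub Pg)).
Qed.

Lemma coset_subgroup L n g : subgroup L -> P `<=` L -> coset n g ->
  L g <-> L (x ^+ n).
Proof.
move=> sL PL Pg; have Lq := PL _ Pg; split=> [Lg|Lxn].
  by have := subgroupM sL Lg (subgroupV sL Lq); rewrite invgM invgK mulKVg.
by have := subgroupM sL Lxn Lq; rewrite mulKVg.
Qed.

Lemma cosetM m n g h : coset m g -> coset n h -> coset (m + n) (g * h).
Proof.
move=> Pg Ph; have comm_q : commute (x ^+ n)^-1 ((x ^+ m)^-1 * g).
  exact/commute_sym/commuteV/(tgen1_commute (tgen1_expg_sub Pg) (tgen1_expg x n)).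
rewrite /= (_ : _ * (g * h) = (x ^+ m)^-1 * g * ((x ^+ n)^-1 * h)).
  exact (subgroupM sP Pg Ph).
by rewrite expgnDr invgM -mulgA (mulgA _ g) mulgA comm_q -!mulgA.
Qed.

Lemma tgen1_expg_mulnp n : P (x ^+ (n * p)).
Proof. by rewrite mulnC expgnA; exact (subgroupX sP n (tgen1_gen (x ^+ p))). Qed.

Lemma cosetV n g : coset n g -> coset (n * p.-1) g^-1.
Proof.
move=> Pg; rewrite /= -invgM; apply: (subgroupV sP).
rewrite (tgen1_commute (coset_sub Pg) (tgen1_expg x _)) -(mulKVg (x ^+ n) g) mulgA.
rewrite -expgnDr -mulnSr prednK ?prime_gt0 //.
exact (subgroupM sP (tgen1_expg_mulnp n) Pg).
Qed.

Lemma coset_modp n g : coset n g -> coset (n %% p) g.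
Proof.
move=> Pg; rewrite /= (_ : g = x ^+ (n %% p) * (x ^+ (n %/ p * p) * ((x ^+ n)^-1 * g))).
  by rewrite mulKg; exact (subgroupM sP (tgen1_expg_mulnp _) Pg).
by rewrite mulgA -expgnDr addnC -divn_eq mulKVg.
Qed.

Lemma tgen1_sub_cosets : H `<=` \bigcup_(i in `I_p) coset i.
Proof.
have p_gt0 := prime_gt0 p_pr; apply: tgen1_min.
- split=> [|g h [i _ Pg] [j _ Ph]|g [i _ Pg]].
  + by exists 0 => //; rewrite /= expg0 invg1 mul1g; exact (subgroup1 sP).
  + by exists ((i + j) %% p); [exact: ltn_pmod | exact: coset_modp (cosetM Pg Ph)].
  + by exists ((i * p.-1) %% p); [exact: ltn_pmod | exact: coset_modp (cosetV Pg)].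
- by apply: closed_bigcup => // i _; exact: closed_coset.
- by exists 1%N; rewrite /= ?prime_gt1 // expg1 mulVg; exact (subgroup1 sP).
Qed.

Lemma tgen1_expg_maximal : P <> H -> maximal_open_subgroup H P.
Proof.
move=> PneH; have clP := tgen_closed [:: x ^+ p].
have coset_P i g : 0 < i < p -> coset i g -> ~ P g.
  case/andP=> i_gt0 lt_ip Pg /(coset_subgroup sP (fun _ => id) Pg) Pxi; apply: PneH.
  apply/seteqP; split; [exact: tgen1_expg_sub | apply: (tgen1_min sP clP)].
  apply (subgroupX_coprime sP Pxi (tgen1_gen (x ^+ p)) i_gt0).
  by rewrite coprime_sym prime_coprime // gtnNdvd.
split=> //; first exact: tgen1_expg_sub.
- exists (~` \bigcup_(i in [set i | 0 < i < p]) coset i); split.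
    apply/closed_openC/closed_bigcup => [|i _]; last exact: closed_coset.
    by apply: sub_finite_set (finite_II p) => i /andP[].
  apply/seteqP; split=> [g Pg|g [nPg Hg]].
    by split; [case=> i Ii Pig; exact: coset_P Ii Pig Pg | exact: tgen1_expg_sub].
  have [[|i] lt_ip Pg] := tgen1_sub_cosets Hg.
    by move: Pg; rewrite /= expg0 invg1 mul1g.
  by case: nPg; exists i.+1.
move=> L sL PL LH; have [LP|/existsNP[k /not_implyP[Lk nPk]]] := pselect (L `<=` P).
  by left; apply/seteqP.
right; apply/seteqP; split=> // h Hh.
have [[|i] lt_ip Pk] := tgen1_sub_cosets (LH k Lk).
  by case: nPk; move: Pk; rewrite /= expg0 invg1 mul1g.
have Lx : L x.
  apply (subgroupX_coprime sL ((coset_subgroup sL PL Pk).1 Lk) (PL _ (tgen1_gen (x ^+ p)))).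
    by [].
  by rewrite coprime_sym prime_coprime // gtnNdvd.
have [j _ Ph] := tgen1_sub_cosets Hh.
exact/(coset_subgroup sL PL Ph)/(subgroupX sL j Lx).
Qed.

Lemma frattini_tgen1 : frattini H = P.
Proof.
apply/seteqP; split=> [g [Hg Phi_g]|g Pg]; last first.
  split; first exact: tgen1_expg_sub.
  move=> M maxM; have [sM MH relM _ _] := maxM.
  have clM := rel_open_subgroup_closed sH (tgen_closed _) sM relM.
  exact: tgen1_min sM clM (maximal_open_subgroup_tgen1_expg maxM) g Pg.
have [->|PneH] := pselect (P = H); first exact: Hg.
exact: Phi_g (tgen1_expg_maximal PneH).
Qed.

End ProcyclicFrattini.

(** * Frattini-injective pro-p groups *)

Hypothesis finjG : frattini_injective (@mul G) (@inv G) 1.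

Lemma tgen1_eq_expgp x y : x ^+ p = y ^+ p -> tgen [:: x] = tgen [:: y].
Proof.
move=> xy_p; apply: finjG; [exact: tgen_fg | exact: tgen_fg |].
by rewrite !frattini_tgen1 xy_p.
Qed.

Lemma expgp_eq1 (t : G) : t ^+ p = 1 -> t = 1.
Proof.
move=> tp1; have /tgen1_eq_expgp tgen_t : t ^+ p = 1 ^+ p by rewrite expg1n.
by apply: tgen1_eq1; rewrite -tgen_t; exact: tgen1_gen.
Qed.

Lemma expgp_inj x y : x ^+ p = y ^+ p -> x = y.
Proof.
move=> xy_p; have cxy : commute x y.
  by apply: (tgen1_commute (tgen1_gen x)); rewrite (tgen1_eq_expgp xy_p); exact: tgen1_gen.
apply/eqP; rewrite -divg_eq1; apply/eqP/expgp_eq1.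
by rewrite expgnFl // xy_p mulgV.
Qed.

Lemma commute_expgp x g : commute (x ^+ p) g -> commute x g.
Proof.
move=> cxpg; apply/commgP/conjg_fixP/expgp_inj.
by rewrite -conjXg; apply/conjg_fixP/commgP.
Qed.

Lemma commute_expg_ppow x g k : commute (x ^+ (p ^ k)) g -> commute x g.
Proof.
elim: k x => [|k IH] x; first by rewrite expg1.
by rewrite expnSr expgnA => /commute_expgp/IH.
Qed.

Lemma expg_ppow_inj x y k : x ^+ (p ^ k) = y ^+ (p ^ k) -> x = y.
Proof.
elim: k x y => [|k IH] x y; first by rewrite !expg1.
by rewrite expnS !expgnA => /IH/expgp_inj.
Qed.

Lemma commute_tgen1_ppow x y x' y' k l :
  tgen [:: x'] (x ^+ (p ^ k)) -> tgen [:: y'] (y ^+ (p ^ l)) -> commute x' y' ->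
  commute x y.
Proof.
move=> tx ty cxy'; apply/(commute_expg_ppow (k := k))/commute_sym.
apply/(commute_expg_ppow (k := l))/commute_sym.
exact: commute_tgen1 (commute_sym (commute_tgen1 (commute_sym cxy') ty)) tx.
Qed.

Lemma virtually_abelian_abelian :
  virtually_abelian (@mul G) (@inv G) 1 -> abelian (@mul G).
Proof.
case=> A [sA [n idxA] cA] x y.
have [m m_gt0 Axm] := finite_index_expg x sA idxA.
have [l l_gt0 Ayl] := finite_index_expg y sA idxA.
have [u p'u def_m] := pfactor_coprime p_pr m_gt0.
have [w p'w def_l] := pfactor_coprime p_pr l_gt0.
apply: (@commute_tgen1_ppow _ _ (x ^+ m) (y ^+ l) (logn p m) (logn p l)); last exact: cA.
  by rewrite {1}def_m mulnC expgnA; exact: tgen1_expg_coprime.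
by rewrite {1}def_l mulnC expgnA; exact: tgen1_expg_coprime.
Qed.

Lemma commute_padic_pow x y (a b : padic_int p) : zp_nonzero a -> zp_nonzero b ->
  commute (padic_pow x a) (padic_pow y b) -> commute x y.
Proof.
move=> /(zp_valuation p_pr)[v [n0 val_a]] /(zp_valuation p_pr)[w [n1 val_b]].
exact (commute_tgen1_ppow (padic_pow_tgen x val_a) (padic_pow_tgen y val_b)).
Qed.

(* Both x^(p^v) and y^(p^v) lie in the procyclic group generated by
   x^a = y^a, and x^(p^v) y^(-p^v) is approximated by x^(a_n) y^(-a_n). *)
Lemma padic_pow_inj x y (a : padic_int p) : zp_nonzero a ->
  padic_pow x a = padic_pow y a -> x = y.
Proof.
move=> /(zp_valuation p_pr)[v [n0 val_a]] xy_a; apply: (@expg_ppow_inj _ _ v).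
set X := x ^+ (p ^ v); set Y := y ^+ (p ^ v).
have tX := padic_pow_tgen x val_a; have := padic_pow_tgen y val_a; rewrite -xy_a => tY.
have cXY : commute X Y := tgen1_commute tX tY.
apply/eqP; rewrite -divg_eq1; apply/eqP/tgen1_eq1.
apply: tgen1_coprime_approx => N oN nN.
have [m1 approx_x] := padic_pow_approx x a oN nN.
have [m2 approx_y] := padic_pow_approx y a oN nN.
have [b def_b p'b] := val_a (maxn (maxn m1 m2) n0) (leq_maxr _ _).
exists b => //; rewrite invg1 mul1g (expgnFl _ cXY) /X /Y -!expgnA -def_b.
set n := maxn _ n0; have le_m1n : m1 <= n by rewrite !leq_max leqnn.
have le_m2n : m2 <= n by rewrite !leq_max leqnn orbT.
have := approx_y n le_m2n; rewrite -xy_a.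
move/(subgroupV nN.1)/(subgroupM nN.1 (approx_x n le_m1n))/(normalJ (padic_pow x a) nN).
by rewrite invgM invgK -!mulgA mulKVg mulgV mulg1.
Qed.

End Profinite.
End TopologicalGroupTheory.

Section TopologicalGroupOfOperations.
Variables (G : ptopologicalType) (mulG : G -> G -> G) (invG : G -> G) (oneG : G).
Hypotheses (groupG : group_axioms mulG invG oneG)
  (mulG_cont : continuous (fun xy : G * G => mulG xy.1 xy.2)) (invG_cont : continuous invG).

(* The statement gives the group by bare operations on a pointed topological
   space; on a copy of its carrier they form a [topGroupType]. *)
Definition group_carrier : Type := G.

Let mulGA : associative mulG. Proof. by case: groupG. Qed.
Let mul1G : left_id oneG mulG. Proof. by case: groupG. Qed.
Let mulG1 : right_id oneG mulG. Proof. by case: groupG. Qed.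
Let mulVG : left_inverse oneG invG mulG. Proof. by case: groupG. Qed.
Let mulGV : right_inverse oneG invG mulG. Proof. by case: groupG. Qed.

HB.instance Definition _ := PointedTopological.on group_carrier.
HB.instance Definition _ :=
  monoid.isGroup.Build group_carrier mulGA mul1G mulG1 mulVG mulGV.
HB.instance Definition _ := isTopologicalGroup.Build group_carrier mulG_cont invG_cont.

Lemma pro_p_frattini_injective_properties p x y (a b : padic_int p) :
    pro_p_group mulG invG oneG p -> frattini_injective mulG invG oneG ->
    zp_nonzero a -> zp_nonzero b ->
  [/\ virtually_abelian mulG invG oneG -> abelian mulG,
      forall g : G, isolated_subgroup mulG oneG p (centralizer mulG g),
      mulG (padic_pow mulG oneG x a) (padic_pow mulG oneG y b)
        = mulG (padic_pow mulG oneG y b) (padic_pow mulG oneG x a) ->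
        mulG x y = mulG y x
    & padic_pow mulG oneG x a = padic_pow mulG oneG y a -> x = y].
Proof.
case=> p_pr _ hsdfG [cmpG tdG] idxG finjG nz_a nz_b.
have gpowG z n : gpow mulG oneG z n = ((z : group_carrier) ^+ n)%g.
  exact (gpowE (z : group_carrier) n).
split.
- exact: (@virtually_abelian_abelian group_carrier hsdfG cmpG tdG p p_pr idxG finjG).
- move=> g z; rewrite /centralizer /= gpowG.
  exact: (@commute_expgp group_carrier hsdfG cmpG tdG p p_pr idxG finjG).
- exact: (@commute_padic_pow group_carrier hsdfG cmpG tdG p p_pr idxG finjG x y a b).
- exact: (@padic_pow_inj group_carrier hsdfG cmpG tdG p p_pr idxG finjG x y a).
Qed.

End TopologicalGroupOfOperations.

Theorem mainTheorem13 (p : nat) (G : ptopologicalType)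
  (mul : G -> G -> G) (inv : G -> G) (one : G)
  (HG : pro_p_group mul inv one p)
  (HF : frattini_injective mul inv one)
  (x y : G) (alpha beta : padic_int p)
  (Ha : zp_nonzero alpha) (Hb : zp_nonzero beta) :
  [/\ virtually_abelian mul inv one -> abelian mul,
      forall g : G, isolated_subgroup mul one p (centralizer mul g),
      mul (padic_pow mul one x alpha) (padic_pow mul one y beta)
        = mul (padic_pow mul one y beta) (padic_pow mul one x alpha) ->
        mul x y = mul y x
    & padic_pow mul one x alpha = padic_pow mul one y alpha -> x = y].
Proof.
have [_ [groupG mul_cont inv_cont] _ _ _] := HG.
exact (pro_p_frattini_injective_properties groupG mul_cont inv_cont x y HG HF Ha Hb).
Qed.
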